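(* Let $(A,E)$ be a $B$-valued Banach noncommutative probability space, $a\in A$ with $E(a)$ invertible, $N\in\mathbb N$, and fix $i\in I$ in the Fock space setting below. Let $\alpha_0=E(a)$. Then there exist $\alpha_n\in\mathcal B_n(B)$, $n=1,\ldots,N$, such that with \[ X=\sum_{n=0}^N\big(V_{i,n}(\alpha_n)+W_{i,n}(\alpha_n)\big)\in\mathcal B(\mathcal F) \] one has $\mathcal E(b_0Xb_1X\cdots b_kX)=E(b_0ab_1a\cdots b_ka)$ for all $k\in\{1,\ldots,N\}$ and all $b_0,\ldots,b_k\in B$ (with $b_j$ acting on $\mathcal F$ as $\lambda(b_j)$).
   Context: A $B$-valued Banach noncommutative probability space is a pair $(A,E)$ where $A$ is a unital Banach algebra containing an isometric copy of the unital complex Banach algebra $B$ as a unital subalgebra and $E:A\to B$ is a bounded projection with $E(b_1ab_2)=b_1E(a)b_2$. Fock space setting: $I$ a set, $\mathbb N=\{1,2,\ldots\}$; $D=\ell^1(I,B)$ (functions $d:I\to B$ with $\sum_i\|d(i)\|<\infty$, left action $(bd)(i)=b\,d(i)$, $\delta_i$ the function $1$ at $i$, $0$ elsewhere); $\mathcal F=B\Omega\oplus\bigoplus_{k\ge1}D^{\hat\otimes k}\hat\otimes B$ ($\ell^1$-sum of projective tensor products, $\Omega$ the unit of the copy $B\Omega$ of $B$); $\lambda(b)$: $b_0\Omega\mapsto(bb_0)\Omega$, $d_1\otimes\cdots\otimes d_k\otimes b_0\mapsto(bd_1)\otimes\cdots\otimes d_k\otimes b_0$; $P$ the projection onto $B\Omega$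 killing other summands, $\mathcal E(X)=P(X\Omega)$; $L_i$: $b_0\Omega\mapsto\delta_i\otimes b_0$, $d_1\otimes\cdots\otimes b_0\mapsto\delta_i\otimes d_1\otimes\cdots\otimes b_0$. $\mathcal B_n(B)$ = bounded multilinear maps $B^n\to B$, $\mathcal B_0(B)=B$. For $n\ge1$, $V_{i,n}(\alpha_n)$, $W_{i,n}(\alpha_n)$ vanish on $B\Omega$ and on $d_1\otimes\cdots\otimes d_k\otimes b_0$ with $k<n$; for $k=n$ they give $\alpha_n(d_1(i),\ldots,d_n(i))b_0\Omega$ resp. $\alpha_n(d_1(i),\ldots,d_n(i))\delta_i\otimes b_0$; for $k>n$ they give $\alpha_n(d_1(i),\ldots,d_n(i))d_{n+1}\otimes\cdots\otimes d_k\otimes b_0$ resp. $\alpha_n(d_1(i),\ldots,d_n(i))\delta_i\otimes d_{n+1}\otimes\cdots\otimes d_k\otimes b_0$. $V_{i,0}(\alpha_0)=\lambda(\alpha_0)$, $W_{i,0}(\alpha_0)=\lambda(\alpha_0)L_i$. *)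

From mathcomp Require Import all_boot all_order all_algebra.
From mathcomp Require Import reals complex.
From Stdlib Require Import ClassicalEpsilon.

Set Implicit Arguments.
Unset Strict Implicit.
Unset Printing Implicit Defensive.

Import Order.TTheory GRing.Theory Num.Theory.
Local Open Scope ring_scope.

Definition cmod (R : realType) (c : R[i]) : R := ComplexField.Normc.normc c.

Record banach_algebra (R : realType) := BanachAlgebra {
  ba_carrier :> algType R[i];
  ba_norm : ba_carrier -> R;
  ba_norm_ge0 : forall x, 0 <= ba_norm x;
  ba_norm_eq0 : forall x, ba_norm x = 0 -> x = 0;
  ba_normD : forall x y, ba_norm (x + y) <= ba_norm x + ba_norm y;
  ba_normZ : forall (c : R[i]) x, ba_norm (c *: x) = cmod c * ba_norm x;
  ba_normM : forall x y, ba_norm (x * y) <= ba_norm x * ba_norm y;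
  ba_norm1 : ba_norm 1 = 1;
  ba_complete : forall u : nat -> ba_carrier,
    (forall e : R, 0 < e -> exists K : nat, forall m n : nat,
        (K <= m)%N -> (K <= n)%N -> ba_norm (u m - u n) < e) ->
    exists l : ba_carrier, forall e : R, 0 < e -> exists K : nat,
        forall n : nat, (K <= n)%N -> ba_norm (u n - l) < e
}.

Arguments ba_norm {R} b _.

Section BNCPS.
Variable R : realType.
Variables (A B : banach_algebra R).

Definition invertible (b : B) : Prop := exists c : B, c * b = 1 /\ b * c = 1.

(* (A,E) is a B-valued Banach noncommutative probability space, where the
   isometric copy of B inside A is given by the embedding [iota]. *)
Definition bncps (iota : B -> A) (E : A -> B) : Prop :=
     (forall (c : R[i]) (x y : B), iota (c *: x + y) = c *: iota x + iota y)
  /\ (forall x y : B, iota (x * y) = iota x * iota y)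
  /\ iota 1 = 1
  /\ (forall x : B, ba_norm A (iota x) = ba_norm B x)
  /\ (forall (c : R[i]) (x y : A), E (c *: x + y) = c *: E x + E y)
  /\ (exists M : R, forall x : A, ba_norm B (E x) <= M * ba_norm A x)
  /\ (forall b : B, E (iota b) = b)
  /\ (forall (b1 b2 : B) (x : A), E (iota b1 * x * iota b2) = b1 * E x * b2).

End BNCPS.

Section Multilinear.
Variable R : realType.
Variable B : banach_algebra R.

Definition upd (n : nat) (x : 'I_n -> B) (j : 'I_n) (y : B) : 'I_n -> B :=
  fun l => if l == j then y else x l.

Definition multilinear (n : nat) (f : ('I_n -> B) -> B) : Prop :=
  forall (x : 'I_n -> B) (j : 'I_n) (c : R[i]) (y z : B),
    f (upd x j (c *: y + z)) = c *: f (upd x j y) + f (upd x j z).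

Definition bounded_ml (n : nat) (f : ('I_n -> B) -> B) : Prop :=
  exists M : R, forall x : 'I_n -> B,
    ba_norm B (f x) <= M * \prod_(j < n) ba_norm B (x j).

Definition in_Bn (n : nat) (f : ('I_n -> B) -> B) : Prop :=
  multilinear f /\ bounded_ml f.

End Multilinear.

(* An elementary tensor d_1 (x) ... (x) d_k (x) b0 (k = 0 meaning b0 Omega)*)
(* is represented by [PT [:: d_1; ...; d_k] b0]; a vector obtained from *)
(* Omega by the operators below is a finite sum of elementary tensors,  *)
(* represented by a list.  All operators (lambda(b), L_i, V_{i,n},      *)
(* W_{i,n}) are given by the paper on elementary tensors and extended   *)
(* additively; P keeps the B Omega component.                           *)
Section Fock.
Variable R : realType.
Variable B : banach_algebra R.
Variable I : Type.

Record ptensor := PT { pt_d : seq (I -> B); pt_b : B }.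
Definition fvec := seq ptensor.

Definition Omega : fvec := [:: PT [::] 1].

Definition delta (i : I) : I -> B :=
  fun j => if excluded_middle_informative (j = i) then 1 else 0.

Definition lam_pt (b : B) (t : ptensor) : ptensor :=
  match pt_d t with
  | [::] => PT [::] (b * pt_b t)
  | d :: ds => PT ((fun j => b * d j) :: ds) (pt_b t)
  end.

Definition L_pt (i : I) (t : ptensor) : ptensor := PT (delta i :: pt_d t) (pt_b t).

Variable i : I.
(* alpha n : B_n(B) for n >= 1; alpha 0 plays the role of alpha_0 in B *)
Variable alpha : forall n : nat, ('I_n -> B) -> B.

Definition coef (n : nat) (ds : seq (I -> B)) : B :=
  alpha (fun j : 'I_n => nth (fun _ => 0) ds j i).

Definition V_pt (n : nat) (t : ptensor) : fvec :=
  if (size (pt_d t) < n)%N then [::]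
  else [:: lam_pt (coef n (pt_d t)) (PT (drop n (pt_d t)) (pt_b t))].

Definition W_pt (n : nat) (t : ptensor) : fvec :=
  if (size (pt_d t) < n)%N then [::]
  else [:: lam_pt (coef n (pt_d t)) (L_pt i (PT (drop n (pt_d t)) (pt_b t)))].

Definition X_vec (N : nat) (v : fvec) : fvec :=
  flatten [seq flatten [seq V_pt n t ++ W_pt n t | n <- iota 0 N.+1] | t <- v].

Definition lam_vec (b : B) (v : fvec) : fvec := map (lam_pt b) v.

Definition P_vec (v : fvec) : B := \sum_(t <- v | size (pt_d t) == 0%N) pt_b t.

(* calE(b_0 X b_1 X ... b_k X) = P(lambda(b_0) X lambda(b_1) X ... lambda(b_k) X Omega) *)
Definition fock_moment (N : nat) (bs : seq B) : B :=
  P_vec (foldr (fun b v => lam_vec b (X_vec N v)) Omega bs).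

End Fock.

(* Only the i-th coordinates of the tensors matter, so the vector
   λ(b_0) X λ(b_1) X ⋯ λ(b_k) X Ω reduces to a finite list of pairs
   ([:: d_1; …; d_m], b) with m <= k.  The only pair of maximal length k comes
   from the terms W_{i,0} = λ(α_0) L_i and is ([:: b_1 α_0; …; b_k α_0], 1), so
     E(b_0 X b_1 X ⋯ b_k X) = b_0 (α_k(b_1 α_0, …, b_k α_0) + R_k(b_1, …, b_k)),
   where the remainder R_k is multilinear, bounded, and involves α_0, …, α_{k-1}
   only.  Since α_0 = E(a) is invertible, α_k can therefore be chosen
   recursively so that the bracket equals E(a b_1 a ⋯ b_k a); the bimodule
   property of E then gives the moment E(b_0 a b_1 a ⋯ b_k a). *)

From mathcomp Require Import all_boot all_order all_algebra.
From mathcomp Require Import reals complex.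
From mathcomp Require Import zify.
From Stdlib Require Import ClassicalEpsilon.

Set Implicit Arguments.
Unset Strict Implicit.
Unset Printing Implicit Defensive.
Import Order.TTheory GRing.Theory Num.Theory.
Local Open Scope ring_scope.

Lemma take_cat_cons T n (s1 s2 : seq T) x : (size s1 < n)%N ->
  take n (s1 ++ x :: s2) = s1 ++ x :: take (n - (size s1).+1) s2.
Proof. by move=> lt_s1n; rewrite take_cat ltnNge ltnW //= -(subnSK lt_s1n). Qed.

Lemma drop_cat_cons T n (s1 s2 : seq T) x : (size s1 < n)%N ->
  drop n (s1 ++ x :: s2) = drop (n - (size s1).+1) s2.
Proof. by move=> lt_s1n; rewrite drop_cat ltnNge ltnW //= -(subnSK lt_s1n). Qed.

Lemma dropl_cat T n (s1 s2 : seq T) : (n <= size s1)%N ->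
  drop n (s1 ++ s2) = drop n s1 ++ s2.
Proof.
rewrite drop_cat leq_eqVlt => /predU1P[->|->] //.
by rewrite ltnn subnn drop0 drop_size.
Qed.

Lemma big_enum_ord T (idx : T) op n (F : 'I_n -> T) :
  \big[op/idx]_(j <- enum 'I_n) F j = \big[op/idx]_(j < n) F j.
Proof. by rewrite [index_enum _]unlock -enumT. Qed.

Lemma mulr_linl (K : pzRingType) (A : lalgType K) (x : A) (c : K) (y z : A) :
  (c *: y + z) * x = c *: (y * x) + z * x.
Proof. by rewrite mulrDl -scalerAl. Qed.

Lemma mulr_linr (K : pzRingType) (A : algType K) (x : A) (c : K) (y z : A) :
  x * (c *: y + z) = c *: (x * y) + x * z.
Proof. by rewrite mulrDr scalerAr. Qed.

Lemma prodr_mulr_const (K : comPzSemiRingType) T (r : seq T) (F : T -> K) (x : K) :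
  \prod_(i <- r) (F i * x) = \prod_(i <- r) F i * x ^+ size r.
Proof.
by elim: r => [|y r IH]; rewrite ?big_nil ?mulr1 // !big_cons IH exprS mulrACA.
Qed.

Section BanachAlgebra.
Variables (R : realType) (B : banach_algebra R).
Local Notation nrm := (ba_norm B).

Lemma ba_norm0 : nrm 0 = 0.
Proof.
rewrite -(scale0r (0 : B)) ba_normZ /cmod /ComplexField.Normc.normc /=.
by rewrite expr0n /= addr0 sqrtr0 mul0r.
Qed.

Lemma ba_normN (x : B) : nrm (- x) = nrm x.
Proof.
rewrite -scaleN1r ba_normZ /cmod /ComplexField.Normc.normc /=.
by rewrite oppr0 sqrrN expr1n expr0n /= addr0 sqrtr1 mul1r.
Qed.

Lemma ba_normB (x y : B) : nrm (x - y) <= nrm x + nrm y.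
Proof. by rewrite -(ba_normN y) ba_normD. Qed.

Lemma ba_norm_sum T (r : seq T) (P : pred T) (F : T -> B) :
  nrm (\sum_(x <- r | P x) F x) <= \sum_(x <- r | P x) nrm (F x).
Proof.
elim/big_ind2: _ => [|r1 x1 r2 x2 le1 le2|//]; first by rewrite ba_norm0.
exact: le_trans (ba_normD _ _) (lerD le1 le2).
Qed.

Lemma prod_ba_norm_ge0 (l : seq B) : 0 <= \prod_(d <- l) nrm d.
Proof. by apply: prodr_ge0 => *; apply: ba_norm_ge0. Qed.

Lemma ba_norm_prod T (r : seq T) (F : T -> B) :
  nrm (\prod_(x <- r) F x) <= \prod_(x <- r) nrm (F x).
Proof.
elim/big_ind2: _ => [|r1 x1 r2 x2 le1 le2|//]; first by rewrite ba_norm1.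
exact: le_trans (ba_normM _ _) (ler_pM (ba_norm_ge0 _) (ba_norm_ge0 _) le1 le2).
Qed.

Definition seq_multilinear (f : seq B -> B) := forall l1 l2 (c : R[i]) y z,
  f (l1 ++ (c *: y + z) :: l2) = c *: f (l1 ++ y :: l2) + f (l1 ++ z :: l2).

Lemma seq_multilinear0 : seq_multilinear (fun _ => 0).
Proof. by move=> *; rewrite scaler0 addr0. Qed.

Lemma seq_multilinearB f g : seq_multilinear f -> seq_multilinear g ->
  seq_multilinear (fun l => f l - g l).
Proof. by move=> f_ml g_ml l1 l2 c y z; rewrite f_ml g_ml scalerBr opprD addrACA. Qed.

Lemma seq_multilinear_mulr f (c : B) : seq_multilinear f ->
  seq_multilinear (fun l => f [seq y * c | y <- l]).
Proof. by move=> f_ml l1 l2 c' y z; rewrite !map_cat /= mulr_linl f_ml. Qed.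

Definition seq_bounded (f : seq B -> B) (n : nat) (C : R) :=
  forall l, size l = n -> nrm (f l) <= C * \prod_(d <- l) nrm d.

Lemma seq_bounded_le f n C D : C <= D -> seq_bounded f n C -> seq_bounded f n D.
Proof.
move=> le_CD f_bd l size_l.
by rewrite (le_trans (f_bd l size_l)) // ler_wpM2r ?prod_ba_norm_ge0.
Qed.

Lemma seq_boundedB f g n C D : seq_bounded f n C -> seq_bounded g n D ->
  seq_bounded (fun l => f l - g l) n (C + D).
Proof.
move=> f_bd g_bd l size_l; rewrite mulrDl (le_trans (ba_normB _ _)) //.
by rewrite lerD ?f_bd ?g_bd.
Qed.

Lemma seq_bounded_mulr f n C (c : B) : 0 <= C -> seq_bounded f n C ->
  seq_bounded (fun l => f [seq y * c | y <- l]) n (C * nrm c ^+ n).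
Proof.
move=> C_ge0 f_bd l size_l; rewrite (le_trans (f_bd _ _)) ?size_map // big_map.
rewrite -mulrA ler_wpM2l // [X in _ <= X]mulrC -size_l -prodr_mulr_const.
rewrite ler_prod // => y _.
by rewrite ba_norm_ge0 ba_normM.
Qed.

End BanachAlgebra.

Section ReducedFock.
Variables (R : realType) (B : banach_algebra R).
Variables (N : nat) (alpha : nat -> seq B -> B).

(* A tensor d_1 ⊗ ⋯ ⊗ d_k ⊗ b_0 enters the operators only through the values
   d_j(i), and is represented by ([:: d_1(i); …; d_k(i)], b_0); see [at_i]. *)
Definition tensor := (seq B * B)%type.

Definition rlam (b : B) (t : tensor) : tensor :=
  if t.1 is d :: ds then (b * d :: ds, t.2) else ([::], b * t.2).

(* [rcontract [::] n] is V_{i,n} and [rcontract [:: 1] n] is W_{i,n}, since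
   delta_i(i) = 1. *)
Definition rcontract (pre : seq B) (n : nat) (t : tensor) : seq tensor :=
  if (size t.1 < n)%N then [::]
  else [:: rlam (alpha n (take n t.1)) (pre ++ drop n t.1, t.2)].

Definition rX1 (t : tensor) : seq tensor :=
  flatten [seq rcontract [::] n t ++ rcontract [:: 1] n t | n <- iota 0 N.+1].

Definition rX (v : seq tensor) : seq tensor := flatten (map rX1 v).

Lemma rX_cons t v : rX (t :: v) = rX1 t ++ rX v.
Proof. by []. Qed.

Definition rstep (b : B) (v : seq tensor) : seq tensor := map (rlam b) (rX v).

Definition rword (bs : seq B) : seq tensor := foldr rstep [:: ([::], 1)] bs.

Lemma rword_cons b bs : rword (b :: bs) = rstep b (rword bs).
Proof. by []. Qed.

Definition rP (v : seq tensor) : B := \sum_(t <- v | size t.1 == 0%N) t.2.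

Definition rPX (t : tensor) : B := alpha (size t.1) t.1 * t.2.

Definition remainder (k : nat) (bs : seq B) : B :=
  \sum_(t <- rword bs | (size t.1 < k)%N) rPX t.

Lemma size_rlam b t : size (rlam b t).1 = size t.1.
Proof. by case: t => [[|d ds] b0]. Qed.

Lemma mem_rcontract pre n t s : s \in rcontract pre n t ->
  (n <= size t.1)%N /\ size s.1 = (size pre + (size t.1 - n))%N.
Proof.
rewrite /rcontract; case: ltnP => //= le_n; rewrite inE => /eqP ->.
by rewrite size_rlam size_cat size_drop.
Qed.

Lemma size_rX1 t : all (fun s : tensor => size s.1 <= (size t.1).+1)%N (rX1 t).
Proof.
apply/allP => s /flatten_mapP[n _]; rewrite mem_cat.
by case/orP => /mem_rcontract[_ ->] /=; lia.
Qed.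

Lemma size_rword bs : all (fun s : tensor => size s.1 <= size bs)%N (rword bs).
Proof.
elim: bs => [|b bs IH] //=; rewrite all_map; apply/allP => s.
rewrite /= size_rlam => /flatten_mapP[t t_in s_in].
by rewrite (leq_trans (allP (size_rX1 t) s s_in)) // ltnS (allP IH).
Qed.

Lemma rP_rstep b v : rP (rstep b v) = b * rP (rX v).
Proof.
rewrite /rP big_map mulr_sumr; apply: congr_big => // [t|[[|d ds] c] //=].
by rewrite size_rlam.
Qed.

Lemma rP_rcontract pre n t : rP (rcontract pre n t) =
  if (size t.1 == n) && (pre == [::]) then rPX t else 0.
Proof.
rewrite /rcontract /rP; case: ltnP => le_n.
  by rewrite big_nil; case: eqP => // eq_n; rewrite eq_n ltnn in le_n.
rewrite big_cons big_nil size_rlam /= size_cat size_drop addr0.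
case: pre => [|p pre] /=; last by rewrite andbF.
have -> : (size t.1 - n == 0)%N = (size t.1 == n) by rewrite subn_eq0 eqn_leq le_n andbT.
rewrite andbT; case: eqP => // eq_n.
by rewrite /rPX take_oversize ?eq_n // drop_oversize ?eq_n.
Qed.

Lemma rP_cat v w : rP (v ++ w) = rP v + rP w.
Proof. exact: big_cat. Qed.

Lemma rP_flatten ss : rP (flatten ss) = \sum_(s <- ss) rP s.
Proof. exact: big_flatten. Qed.

Lemma rP_rX1 t : rP (rX1 t) = if (size t.1 <= N)%N then rPX t else 0.
Proof.
rewrite rP_flatten big_map.
under eq_bigr => n _ do rewrite rP_cat !rP_rcontract andbT andbF addr0 eq_sym.
by change (iota 0 N.+1) with (index_iota 0 N.+1); rewrite -big_mkcond big_nat1_eq.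
Qed.

Lemma rP_rX v : rP (rX v) = \sum_(t <- v | (size t.1 <= N)%N) rPX t.
Proof.
by rewrite rP_flatten big_map [RHS]big_mkcond; apply: eq_bigr => t _; rewrite rP_rX1.
Qed.

Lemma rX1_top t :
  [seq s <- rX1 t | size s.1 == (size t.1).+1] = [:: (alpha 0 [::] :: t.1, t.2)].
Proof.
have -> : rX1 t = rcontract [::] 0 t ++ rcontract [:: 1] 0 t
    ++ flatten [seq rcontract [::] n t ++ rcontract [:: 1] n t | n <- iota 1 N].
  by rewrite /rX1 /=.
rewrite filter_cat filter_cat [X in _ ++ _ ++ X](@eq_in_filter _ _ pred0); last first.
  move=> s /flatten_mapP[n]; rewrite mem_iota mem_cat => /andP[n_gt0 _].
  case/orP => /mem_rcontract[n_le ->]; apply: ltn_eqF; rewrite ltnS /=.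
    by rewrite add0n leq_subr.
  by rewrite add1n ltn_subrL n_gt0 (leq_trans n_gt0 n_le).
rewrite filter_pred0 /rcontract /= take0 drop0 size_rlam /= eqn_leq ltnn andbF eqxx.
by rewrite /= /rlam /= mulr1.
Qed.

Lemma rX_top v m : all (fun s : tensor => size s.1 <= m)%N v ->
  [seq s <- rX v | size s.1 == m.+1]
  = [seq (alpha 0 [::] :: t.1, t.2) | t <- [seq t <- v | size t.1 == m]].
Proof.
elim: v => [|t v IH] // /andP[t_le v_le]; rewrite rX_cons filter_cat IH //.
have [<-|t_ne] := eqVneq (size t.1) m; first by rewrite rX1_top /= eqxx.
rewrite (@eq_in_filter _ _ pred0) ?filter_pred0 /= ?(negbTE t_ne) // => s.
move=> /(allP (size_rX1 t)) s_le.
by apply: ltn_eqF; rewrite ltnS (leq_trans s_le) // ltn_neqAle t_ne.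
Qed.

Lemma rword_top bs :
  [seq s <- rword bs | size s.1 == size bs] = [:: ([seq y * alpha 0 [::] | y <- bs], 1)].
Proof.
elim: bs => [|b bs IH] //.
rewrite rword_cons /rstep filter_map.
rewrite (@eq_filter _ _ (fun s : tensor => size s.1 == (size bs).+1)) => [|s].
  by rewrite (rX_top (size_rword bs)) [filter _ _]IH.
by rewrite /preim inE size_rlam.
Qed.

Lemma rP_rword_cons b0 bs : (size bs <= N)%N ->
  rP (rword (b0 :: bs))
  = b0 * (alpha (size bs) [seq y * alpha 0 [::] | y <- bs] + remainder (size bs) bs).
Proof.
move=> bs_le; rewrite rword_cons rP_rstep rP_rX.
rewrite (bigID (fun t : tensor => size t.1 == size bs)) /=.
congr (_ * (_ + _)).
  rewrite (eq_bigl (fun t : tensor => size t.1 == size bs)) => [|t].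
    by rewrite -big_filter rword_top big_seq1 /rPX size_map mulr1.
  by case: eqP => [->|_]; rewrite ?bs_le ?andbF.
rewrite /remainder big_seq_cond [RHS]big_seq_cond; apply: eq_bigl => t.
case: (boolP (t \in rword bs)) => //= /(allP (size_rword bs)) t_le.
by rewrite ltn_neqAle t_le andbT (leq_trans t_le bs_le).
Qed.

Definition tensor_linear (F : tensor -> B) :=
  (forall ds1 ds2 b (c : R[i]) y z, F (ds1 ++ (c *: y + z) :: ds2, b)
     = c *: F (ds1 ++ y :: ds2, b) + F (ds1 ++ z :: ds2, b))
  /\ (forall ds (c : R[i]) y z, F (ds, c *: y + z) = c *: F (ds, y) + F (ds, z)).

Lemma eq_tensor_linear F1 F2 : F1 =1 F2 -> tensor_linear F1 -> tensor_linear F2.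
Proof.
by move=> eqF [F1_slot F1_b]; split=> *; rewrite -!eqF ?F1_slot ?F1_b.
Qed.

Lemma tensor_linearD F1 F2 : tensor_linear F1 -> tensor_linear F2 ->
  tensor_linear (fun t => F1 t + F2 t).
Proof.
by move=> [F1_slot F1_b] [F2_slot F2_b]; split=> *;
  rewrite ?F1_slot ?F2_slot ?F1_b ?F2_b scalerDr addrACA.
Qed.

Lemma tensor_linear_sum T (r : seq T) (F : T -> tensor -> B) :
  (forall x, tensor_linear (F x)) -> tensor_linear (fun t => \sum_(x <- r) F x t).
Proof.
move=> F_lin; split=> *; rewrite scaler_sumr -big_split; apply: eq_bigr => x _.
  by case: (F_lin x) => ->.
by case: (F_lin x) => _ ->.
Qed.

Lemma rlam_linear F t (c : R[i]) u w : tensor_linear F ->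
  F (rlam (c *: u + w) t) = c *: F (rlam u t) + F (rlam w t).
Proof.
case: t => [[|d ds] b] [F_slot F_b]; rewrite /rlam /= mulr_linl; first exact: F_b.
exact: (F_slot [::]).
Qed.

Lemma tensor_linear_rlam F b : tensor_linear F -> tensor_linear (fun t => F (rlam b t)).
Proof.
move=> [F_slot F_b]; split => [[|d ds1] ds2 b0 c y z|[|d ds] c y z]; rewrite /rlam /=.
- by rewrite mulr_linr (F_slot [::]).
- exact: (F_slot (b * d :: ds1)).
- by rewrite mulr_linr F_b.
- exact: F_b.
Qed.

Hypothesis alpha_multilinear : forall n, (0 < n)%N -> seq_multilinear (alpha n).

Lemma tensor_linear_rcontract F pre n : tensor_linear F ->
  tensor_linear (fun t => \sum_(s <- rcontract pre n t) F s).
Proof.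
move=> F_lin; apply: (@eq_tensor_linear (fun t => if (size t.1 < n)%N then 0
    else F (rlam (alpha n (take n t.1)) (pre ++ drop n t.1, t.2)))).
  by move=> t; rewrite /rcontract; case: ifP; rewrite ?big_nil ?big_seq1.
have lam_lin b := tensor_linear_rlam b F_lin.
split=> [ds1 ds2 b c y z|ds c y z] /=; rewrite ?size_cat /=; case: ifP => _;
  rewrite ?scaler0 ?addr0 //; last by case: (lam_lin (alpha n (take n ds))) => _ ->.
have [lt_ds1n|le_nds1] := ltnP (size ds1) n.
  rewrite !take_cat_cons // !drop_cat_cons // alpha_multilinear ?rlam_linear //.
  exact: leq_ltn_trans lt_ds1n.
rewrite !takel_cat // !dropl_cat // !catA.
by case: (lam_lin (alpha n (take n ds1))) => ->.
Qed.

Lemma tensor_linear_rX1 F : tensor_linear F ->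
  tensor_linear (fun t => \sum_(s <- rX1 t) F s).
Proof.
move=> F_lin; apply: (@eq_tensor_linear (fun t => \sum_(n <- iota 0 N.+1)
    (\sum_(s <- rcontract [::] n t) F s + \sum_(s <- rcontract [:: 1] n t) F s))).
  by move=> t; rewrite big_flatten big_map; apply: eq_bigr => n _; rewrite big_cat.
by apply: tensor_linear_sum => n; apply: tensor_linearD; apply: tensor_linear_rcontract.
Qed.

Lemma sum_foldr_rstep F bs : tensor_linear F -> exists2 G, tensor_linear G &
  forall v, \sum_(s <- foldr rstep v bs) F s = \sum_(t <- v) G t.
Proof.
elim: bs F => [|b bs IH] F F_lin; first by exists F.
have [G G_lin sumG] := IH _ (tensor_linear_rX1 (tensor_linear_rlam b F_lin)).
by exists G => // v; rewrite big_map big_flatten big_map sumG.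
Qed.

Lemma sum_rword_multilinear F : tensor_linear F ->
  seq_multilinear (fun bs => \sum_(s <- rword bs) F s).
Proof.
move=> F_lin l1 l2 c y z; rewrite /rword !foldr_cat.
have [G G_lin sumG] := sum_foldr_rstep l1 F_lin.
rewrite !sumG !big_map scaler_sumr -big_split; apply: eq_bigr => t _.
exact: rlam_linear.
Qed.

Lemma remainder_multilinear k : seq_multilinear (remainder k).
Proof.
have remE bs : remainder k bs
    = \sum_(t <- rword bs) (if (size t.1 < k)%N then rPX t else 0).
  exact: big_mkcond.
move=> l1 l2 c y z; rewrite !remE; apply: sum_rword_multilinear.
split=> [ds1 ds2 b c' y' z'|ds c' y' z']; rewrite /rPX /= ?size_cat /=;
  case: ifP => _; rewrite ?scaler0 ?addr0 ?mulr_linr //.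
by rewrite alpha_multilinear ?mulr_linl // addnS.
Qed.

Local Notation nrm := (ba_norm B).

Definition tensor_norm (t : tensor) : R := \prod_(d <- t.1) nrm d * nrm t.2.

Definition vec_norm (v : seq tensor) : R := \sum_(t <- v) tensor_norm t.

Lemma tensor_norm_ge0 t : 0 <= tensor_norm t.
Proof. by rewrite mulr_ge0 ?prod_ba_norm_ge0 ?ba_norm_ge0. Qed.

Lemma tensor_norm_rlam b t : tensor_norm (rlam b t) <= nrm b * tensor_norm t.
Proof.
case: t => [[|d ds] b0]; rewrite /rlam /tensor_norm /= ?big_nil ?big_cons ?mul1r.
  exact: ba_normM.
by rewrite !mulrA ler_wpM2r ?ba_norm_ge0 // ler_wpM2r ?prod_ba_norm_ge0 ?ba_normM.
Qed.

Lemma vec_norm_rlam b v : vec_norm (map (rlam b) v) <= nrm b * vec_norm v.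
Proof.
by rewrite /vec_norm big_map mulr_sumr; apply: ler_sum => t _; apply: tensor_norm_rlam.
Qed.

Variable C : R.
Hypothesis C_ge0 : 0 <= C.
Hypothesis alpha_bounded : forall n, seq_bounded (alpha n) n C.

Lemma rPX_bounded t : nrm (rPX t) <= C * tensor_norm t.
Proof.
rewrite /tensor_norm mulrA (le_trans (ba_normM _ _)) // ler_wpM2r ?ba_norm_ge0 //.
exact: alpha_bounded.
Qed.

Lemma vec_norm_rcontract pre n t : \prod_(d <- pre) nrm d <= 1 ->
  vec_norm (rcontract pre n t) <= C * tensor_norm t.
Proof.
move=> pre_le1; rewrite /rcontract /vec_norm; case: ltnP => le_n.
  by rewrite big_nil mulr_ge0 ?tensor_norm_ge0.
rewrite big_seq1 (le_trans (tensor_norm_rlam _ _)) //.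
have size_take_n : size (take n t.1) = n by rewrite size_take_min; apply/minn_idPl.
rewrite (le_trans (ler_wpM2r (tensor_norm_ge0 _) (alpha_bounded size_take_n))) //.
rewrite /tensor_norm /= big_cat /= -{3}(cat_take_drop n t.1) big_cat /= -!mulrA.
rewrite ler_wpM2l // ler_wpM2l ?prod_ba_norm_ge0 // ler_piMl //.
by rewrite mulr_ge0 ?prod_ba_norm_ge0 ?ba_norm_ge0.
Qed.

Definition X_bound : R := (C + C) *+ N.+1.

Lemma X_bound_ge0 : 0 <= X_bound.
Proof. by rewrite mulrn_wge0 ?addr_ge0. Qed.

Lemma vec_norm_rX v : vec_norm (rX v) <= X_bound * vec_norm v.
Proof.
rewrite /vec_norm big_flatten big_map mulr_sumr; apply: ler_sum => t _.
rewrite big_flatten big_map /X_bound mulrnAl.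
change (iota 0 N.+1) with (index_iota 0 (N.+1 - 0)).
rewrite -[N.+1](subn0 N.+1) -sumr_const_nat; apply: ler_sum => n _.
rewrite big_cat mulrDl; apply: lerD; apply: vec_norm_rcontract.
  by rewrite big_nil.
by rewrite big_seq1 ba_norm1.
Qed.

Lemma vec_norm_rword bs :
  vec_norm (rword bs) <= X_bound ^+ size bs * \prod_(b <- bs) nrm b.
Proof.
elim: bs => [|b bs IH].
  by rewrite /vec_norm /tensor_norm !big_seq1 big_nil ba_norm1 !mul1r.
rewrite rword_cons (le_trans (vec_norm_rlam _ _)) // big_cons exprS.
rewrite mulrCA -mulrA ler_wpM2l ?ba_norm_ge0 // (le_trans (vec_norm_rX _)) //.
by rewrite ler_wpM2l ?X_bound_ge0.
Qed.

Lemma remainder_bounded k n : seq_bounded (remainder k) n (C * X_bound ^+ n).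
Proof.
move=> bs <-; rewrite (le_trans (ba_norm_sum _ _ _)) // -mulrA.
rewrite (le_trans _ (ler_wpM2l C_ge0 (vec_norm_rword bs))) //.
rewrite /vec_norm mulr_sumr big_mkcond ler_sum // => t _.
by case: ifP => _; [apply: rPX_bounded | rewrite mulr_ge0 ?tensor_norm_ge0].
Qed.

End ReducedFock.

Section Locality.
Variables (R : realType) (B : banach_algebra R) (N : nat) (alpha1 alpha2 : nat -> seq B -> B).

Lemma rword_ext bs :
  (forall n l, (n < size bs)%N -> alpha1 n l = alpha2 n l) ->
  rword N alpha1 bs = rword N alpha2 bs.
Proof.
elim: bs => [|b bs IH] // eq_alpha.
rewrite !rword_cons IH => [|n l lt_n]; last by apply: eq_alpha; apply: ltnW.
congr map; congr flatten; apply/eq_in_map => t /(allP (size_rword N alpha2 bs)) t_le.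
congr flatten; apply: eq_map => n; rewrite /rcontract; case: ltnP => // le_n.
by rewrite eq_alpha // ltnS (leq_trans le_n).
Qed.

Lemma remainder_ext k bs :
  (forall n l, (n < k)%N -> alpha1 n l = alpha2 n l) -> (size bs <= k)%N ->
  remainder N alpha1 k bs = remainder N alpha2 k bs.
Proof.
move=> eq_alpha bs_le; rewrite /remainder rword_ext => [|n l lt_n].
  by apply: eq_bigr => t lt_t; rewrite /rPX eq_alpha.
by apply: eq_alpha; apply: leq_trans bs_le.
Qed.

End Locality.

Section FockReduction.
Variables (R : realType) (B : banach_algebra R) (N : nat) (alpha : nat -> seq B -> B).

Definition ord_alpha n (x : 'I_n -> B) : B := alpha n [seq x j | j <- enum 'I_n].

Lemma map_upd_enum n (x : 'I_n -> B) (j : 'I_n) (w : B) :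
  [seq upd x j w l | l <- enum 'I_n]
  = [seq x l | l <- take j (enum 'I_n)] ++ w :: [seq x l | l <- drop j.+1 (enum 'I_n)].
Proof.
have j_lt : (j < size (enum 'I_n))%N by rewrite size_enum_ord.
have enumE := esym (cat_take_drop j (enum 'I_n)).
rewrite (drop_nth j j_lt) nth_ord_enum in enumE.
have := enum_uniq 'I_n; rewrite {1}enumE cat_uniq /=.
case/and3P=> _ /norP[j_notin_take _] /andP[j_notin_drop _].
rewrite {1}enumE map_cat /= {2}/upd eqxx; congr (_ ++ _ :: _).
  apply/eq_in_map => l l_in; rewrite /upd; case: eqP => // l_j.
  by move: l_in; rewrite l_j (negbTE j_notin_take).
apply/eq_in_map => l l_in; rewrite /upd; case: eqP => // l_j.
by move: l_in; rewrite l_j (negbTE j_notin_drop).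
Qed.

Lemma in_Bn_ord_alpha n C :
  seq_multilinear (alpha n) -> seq_bounded (alpha n) n C -> in_Bn (ord_alpha (n := n)).
Proof.
move=> alpha_ml alpha_bd; split=> [x j c y z|].
  by rewrite /ord_alpha !map_upd_enum alpha_ml.
exists C => x; have size_x : size [seq x j | j <- enum 'I_n] = n.
  by rewrite size_map size_enum_ord.
by rewrite /ord_alpha (le_trans (alpha_bd _ size_x)) // big_map big_enum.
Qed.

Variables (I : Type) (i : I).

Definition at_i (t : ptensor B I) : tensor B := ([seq d i | d <- pt_d t], pt_b t).

Lemma coef_ord_alpha n ds : (n <= size ds)%N ->
  coef i ord_alpha n ds = alpha n (take n [seq d i | d <- ds]).
Proof.
move=> le_n; rewrite /coef /ord_alpha; congr (alpha n _).
rewrite -(map_nth_iota0 0) ?size_map // -val_enum_ord -map_comp.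
apply/eq_in_map => j _ /=; rewrite (nth_map (fun _ => 0)) //.
exact: leq_trans (ltn_ord j) le_n.
Qed.

Lemma at_i_lam b t : at_i (lam_pt b t) = rlam b (at_i t).
Proof. by case: t => [[|d ds] b0]. Qed.

Lemma at_i_V n t : map at_i (V_pt i ord_alpha n t) = rcontract alpha [::] n (at_i t).
Proof.
rewrite /V_pt /rcontract /= size_map; case: ltnP => //= le_n.
by rewrite at_i_lam coef_ord_alpha // /at_i /= map_drop.
Qed.

Lemma at_i_W n t : map at_i (W_pt i ord_alpha n t) = rcontract alpha [:: 1] n (at_i t).
Proof.
rewrite /W_pt /rcontract /= size_map; case: ltnP => //= le_n.
rewrite at_i_lam coef_ord_alpha // /at_i /= map_drop /delta.
by case: excluded_middle_informative.
Qed.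

Lemma at_i_X1 t : map at_i (flatten
    [seq V_pt i ord_alpha n t ++ W_pt i ord_alpha n t | n <- iota 0 N.+1])
  = rX1 N alpha (at_i t).
Proof.
rewrite map_flatten -map_comp /rX1 (eq_map (g := fun n =>
  rcontract alpha [::] n (at_i t) ++ rcontract alpha [:: 1] n (at_i t))) => // n.
by rewrite /comp map_cat at_i_V at_i_W.
Qed.

Lemma at_i_X v : map at_i (X_vec i ord_alpha N v) = rX N alpha (map at_i v).
Proof.
rewrite /X_vec /rX map_flatten -!map_comp (eq_map (g := rX1 N alpha \o at_i)) => // t.
exact: at_i_X1.
Qed.

Lemma P_vec_at_i v : P_vec v = rP (map at_i v).
Proof. by rewrite /P_vec /rP big_map; apply: eq_bigl => t; rewrite /at_i /= size_map. Qed.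

Lemma fock_moment_rword bs : fock_moment i ord_alpha N bs = rP (rword N alpha bs).
Proof.
rewrite /fock_moment P_vec_at_i; congr rP.
elim: bs => [|b bs IH] //.
by rewrite rword_cons /rstep /= /lam_vec -map_comp (eq_map (at_i_lam b)) map_comp at_i_X IH.
Qed.

End FockReduction.

Section Construction.
Variables (R : realType) (A B : banach_algebra R) (iota : B -> A) (E : A -> B).
Variables (a : A) (N : nat) (c : B).
Local Notation nrm := (ba_norm _).

Definition moment_target (l : seq B) : B := E (a * \prod_(y <- l) (iota y * a)).

(* [alpha_upto k n] is alpha_n for n <= k and 0 for n > k; alpha_k is obtained
   by solving the identity of [rP_rword_cons] for its first summand, see
   [alpha_upto_moment]. *)
Fixpoint alpha_upto k : nat -> seq B -> B :=
  if k is k'.+1 then fun n l =>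
    if n == k then moment_target [seq y * c | y <- l]
                   - remainder N (alpha_upto k') k [seq y * c | y <- l]
    else alpha_upto k' n l
  else fun n _ => if n == 0%N then E a else 0.

Lemma alpha_upto0 k l : alpha_upto k 0 l = E a.
Proof. by elim: k. Qed.

Lemma alpha_upto_stable k m n l : (n <= k <= m)%N -> alpha_upto m n l = alpha_upto k n l.
Proof.
case/andP=> le_nk /subnKC <-; elim: (m - k)%N => [|d IH]; first by rewrite addn0.
rewrite addnS /= IH; case: eqP => // eq_n.
by move: le_nk; rewrite eq_n ltnNge leq_addr.
Qed.

Hypothesis iota_linear :
  forall (c : R[i]) (x y : B), iota (c *: x + y) = c *: iota x + iota y.
Hypothesis E_linear :
  forall (c : R[i]) (x y : A), E (c *: x + y) = c *: E x + E y.

Lemma moment_target_multilinear : seq_multilinear moment_target.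
Proof.
move=> l1 l2 c' y z; rewrite /moment_target !big_cat !big_cons /=.
by rewrite iota_linear mulr_linl mulr_linl mulr_linr mulr_linr E_linear.
Qed.

Lemma alpha_upto_multilinear k n : (0 < n)%N -> seq_multilinear (alpha_upto k n).
Proof.
elim: k n => [|k IH] [|n] //= _; first exact: seq_multilinear0.
case: eqP => _; last exact: IH.
apply: seq_multilinearB; apply: seq_multilinear_mulr.
  exact: moment_target_multilinear.
exact: remainder_multilinear.
Qed.

Variable M : R.
Hypothesis M_ge0 : 0 <= M.
Hypothesis E_bounded : forall x, nrm (E x) <= M * nrm x.
Hypothesis iota_isometric : forall x, nrm (iota x) = nrm x.

Lemma moment_target_bounded n : seq_bounded moment_target n (M * nrm a * nrm a ^+ n).
Proof.
move=> l <-; rewrite (le_trans (E_bounded _)) // -!mulrA ler_wpM2l //.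
rewrite (le_trans (ba_normM _ _)) // ler_wpM2l ?ba_norm_ge0 //.
rewrite mulrC -prodr_mulr_const (le_trans (ba_norm_prod _ _)) // ler_prod // => y _.
by rewrite ba_norm_ge0 (le_trans (ba_normM _ _)) ?iota_isometric.
Qed.

Lemma alpha_upto_bounded k : exists2 C, 0 <= C & forall n, seq_bounded (alpha_upto k n) n C.
Proof.
elim: k => [|k [C C_ge0 alpha_bd]].
  exists (nrm (E a)) => [|[|n] l /= size_l]; rewrite ?ba_norm_ge0 //.
    by rewrite (size0nil size_l) big_nil mulr1.
  by rewrite ba_norm0 mulr_ge0 ?ba_norm_ge0 ?prod_ba_norm_ge0.
pose D := M * nrm a * nrm a ^+ k.+1 * nrm c ^+ k.+1
          + C * X_bound N C ^+ k.+1 * nrm c ^+ k.+1.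
have D_ge0 : 0 <= D.
  by rewrite addr_ge0 ?mulr_ge0 ?exprn_ge0 ?ba_norm_ge0 ?X_bound_ge0.
have target_bd : seq_bounded (fun l => moment_target [seq y * c | y <- l]
    - remainder N (alpha_upto k) k.+1 [seq y * c | y <- l]) k.+1 D.
  apply: seq_boundedB; apply: seq_bounded_mulr.
  - by rewrite !mulr_ge0 ?exprn_ge0 ?ba_norm_ge0.
  - exact: moment_target_bounded.
  - by rewrite mulr_ge0 ?exprn_ge0 ?X_bound_ge0.
  - exact: remainder_bounded.
exists (C + D) => [|n l size_l /=]; first exact: addr_ge0.
have [le_D le_C] : D <= C + D /\ C <= C + D by rewrite lerDl lerDr.
case: eqP => [eq_n|_]; last exact: seq_bounded_le le_C (alpha_bd n) l size_l.
by rewrite eq_n in size_l; apply: seq_bounded_le le_D target_bd l size_l.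
Qed.

Hypothesis c_right_inverse : E a * c = 1.

Lemma alpha_upto_moment bs : (0 < size bs <= N)%N ->
  alpha_upto N (size bs) [seq y * E a | y <- bs] + remainder N (alpha_upto N) (size bs) bs
  = moment_target bs.
Proof.
case: bs => // b bs /= bs_lt.
have scaleK : [seq y * c | y <- [seq y * E a | y <- bs]] = bs.
  rewrite -map_comp -[RHS]map_id; apply: eq_map => y.
  by rewrite /= -mulrA c_right_inverse mulr1.
rewrite (@alpha_upto_stable (size bs).+1) ?leqnn //= eqxx -mulrA c_right_inverse mulr1 scaleK.
rewrite (@remainder_ext _ _ N (alpha_upto N) (alpha_upto (size bs))) ?subrK // => n l lt_n.
by rewrite (@alpha_upto_stable (size bs)) // -ltnS lt_n ltnW.
Qed.

End Construction.

Unset Implicit Arguments.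

Theorem mainTheorem9 (R : realType) (A B : banach_algebra R)
    (iota : B -> A) (E : A -> B) (I : Type) (i : I) (a : A) (N : nat) :
  bncps iota E ->
  invertible (E a) ->
  (0 < N)%N ->
  exists alpha : forall n : nat, ('I_n -> B) -> B,
    (forall v : 'I_0 -> B, alpha 0%N v = E a) /\
    (forall n : nat, (0 < n <= N)%N -> in_Bn (alpha n)) /\
    (forall k : nat, (0 < k <= N)%N -> forall b : 'I_k.+1 -> B,
       fock_moment i alpha N [seq b j | j <- enum 'I_k.+1]
       = E (\prod_(j < k.+1) (iota (b j) * a))).
Proof.
move=> [iota_lin [_ [iota1 [iota_iso [E_lin [[M E_bd] [_ E_bimod]]]]]]] [c [_ Ec]] _.
have M_ge0 : 0 <= M.
  by move: (E_bd 1); rewrite ba_norm1 mulr1; apply: le_trans (ba_norm_ge0 _).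
pose alpha := alpha_upto iota E a N c N.
exists (ord_alpha alpha); split; [|split].
- by move=> v; rewrite /ord_alpha /alpha alpha_upto0.
- move=> n /andP[n_gt0 _].
  have [C _ alpha_bd] := alpha_upto_bounded a N c M_ge0 E_bd iota_iso N.
  exact: in_Bn_ord_alpha (alpha_upto_multilinear a N c iota_lin E_lin N n_gt0) (alpha_bd n).
move=> k k_range b; rewrite fock_moment_rword enum_ordSl /= -map_comp.
set bs := [seq (b \o lift ord0) j | j <- enum 'I_k].
have size_bs : size bs = k by rewrite size_map size_enum_ord.
rewrite rP_rword_cons; last by rewrite size_bs; case/andP: k_range.
rewrite /alpha alpha_upto0 alpha_upto_moment ?size_bs //.
rewrite /moment_target big_ord_recl /bs big_map big_enum_ord /=.
by rewrite -[LHS]mulr1 -E_bimod iota1 mulr1 mulrA.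
Qed.
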